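(* $(S,s)$ is the final coalgebra for $F=M\otimes-$ on $\mathbf{Met_3}^{C}$: for every coalgebra $(X,e\colon X\to M\otimes X)$ in $\mathbf{Met_3}^{C}$ there is a unique morphism $f\colon X\to S$ in $\mathbf{Met_3}^{C}$ with $s\circ f=(M\otimes f)\circ e$.
   Context: A tripointed metric space is a set with three distinct points $T,L,R$ and a metric bounded by $1$ in which $T,L,R$ have pairwise distance $1$. $\mathbf{Met_3}^{C}$: tripointed metric spaces with continuous maps preserving $T,L,R$. Let $M=\{a,b,c\}$. For a tripointed metric space $X$, $M\times X$ has metric $d((m,x),(n,y))=\tfrac12d(x,y)$ if $m=n$ and $1$ otherwise; $M\otimes X$ is the quotient metric space by the equivalence relation generated by $(b,T)\sim(a,L)$, $(a,R)\sim(c,T)$, $(c,L)\sim(b,R)$, with elements $m\otimes x$ and distinguished points $a\otimes T,b\otimes L,c\otimes R$; $F=M\otimes-$ with $(M\otimes f)(m\otimes x)=m\otimes f(x)$. A coalgebra is $(X,e\colon X\to FX)$. Let $I=\{T,L,R\}$ with the discrete metric and $!\colon I\to FI$ be $T\mapsto a\otimes T$, $L\mapsto b\otimes L$, $R\mapsto c\otimes R$; the maps $F^n!$ are isometric embeddings and $G$ is the metric union (colimit) of $I\to FI\to F^2I\to\cdots$, i.e. expressions $m_0\otimes\cdots\otimes m_{n-1}\otimes z$ ($z\in\{T,L,R\}$) modulo the induced identifications, with $g\colon M\otimes G\to G$, $g(m\otimes w)=m\otimes w$, a bijective isometry ($(G,g)$ is the initial $F$-algebra in the category of tripointed metric spaces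 with short maps). $S$ is the Cauchy completion of $G$, tripointed by $T,L,R$; the completion of $g$ yields a bijective isometry $\psi\colon M\otimes S\to S$, and $s=\psi^{-1}\colon S\to M\otimes S$. *)

From Stdlib Require Import Reals Lra List ClassicalEpsilon Relations Eqdep_dec.
Open Scope R_scope.

Definition is_inf (E : R -> Prop) (l : R) : Prop :=
  (forall x, E x -> l <= x) /\ (forall l', (forall x, E x -> l' <= x) -> l' <= l).

(* infimum of E (junk value 0 if it does not exist) *)
Definition Rinf (E : R -> Prop) : R :=
  match excluded_middle_informative (exists l, is_inf E l) with
  | left h => proj1_sig (constructive_indefinite_description _ h)
  | right _ => 0
  end.

(* limit of a real sequence (junk value 0 if it does not converge) *)
Definition seq_lim (u : nat -> R) : R :=
  match excluded_middle_informative (exists l, Un_cv u l) with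
  | left h => proj1_sig (constructive_indefinite_description _ h)
  | right _ => 0
  end.

Section MetricIdentification.
Variables (A : Type) (dom : A -> Prop) (d : A -> A -> R).

Definition mid : Type := {P : A -> Prop | exists x, dom x /\ P = (fun y => d x y = 0)}.

Definition mrep (P : mid) : A :=
  proj1_sig (constructive_indefinite_description _ (proj2_sig P)).

Definition mcls (x : A) (h : dom x) : mid :=
  exist _ (fun y => d x y = 0) (ex_intro _ x (conj h eq_refl)).

Definition mcls_or (x : A) (z : mid) : mid :=
  match excluded_middle_informative (dom x) with
  | left h => mcls x h
  | right _ => z
  end.

Definition mdist (P Q : mid) : R := d (mrep P) (mrep Q).
End MetricIdentification.
Arguments mid {A}.
Arguments mcls {A}.
Arguments mcls_or {A}.
Arguments mrep {A dom d}.
Arguments mdist {A dom d}.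

Definition clsT {A : Type} (d : A -> A -> R) (x : A) : mid (fun _ => True) d :=
  mcls (fun _ => True) d x I.

Record tms := Tms { car :> Type; dist : car -> car -> R; pT : car; pL : car; pR : car }.
Arguments dist {t}.
Arguments pT t : clear implicits.
Arguments pL t : clear implicits.
Arguments pR t : clear implicits.

Definition is_metric {X : Type} (d : X -> X -> R) : Prop :=
  (forall x y, 0 <= d x y) /\
  (forall x y, d x y = 0 <-> x = y) /\
  (forall x y, d x y = d y x) /\
  (forall x y z, d x z <= d x y + d y z).

Definition is_tms (X : tms) : Prop :=
  is_metric (@dist X) /\ (forall x y : X, dist x y <= 1) /\
  pT X <> pL X /\ pT X <> pR X /\ pL X <> pR X /\
  dist (pT X) (pL X) = 1 /\ dist (pT X) (pR X) = 1 /\ dist (pL X) (pR X) = 1.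

Definition continuous_map (X Y : tms) (f : X -> Y) : Prop :=
  forall (x : X) (eps : R), 0 < eps ->
    exists delta, 0 < delta /\
      forall y : X, dist x y < delta -> dist (f x) (f y) < eps.

Definition tripointed (X Y : tms) (f : X -> Y) : Prop :=
  f (pT X) = pT Y /\ f (pL X) = pL Y /\ f (pR X) = pR Y.

Definition morph (X Y : tms) (f : X -> Y) : Prop :=
  continuous_map X Y f /\ tripointed X Y f.

Inductive Mlab := ma | mb | mc.
Definition Mlab_eq_dec (x y : Mlab) : {x = y} + {x <> y}.
Proof. decide equality. Defined.

Section Ften.
Variable X : tms.

Definition MX : Type := (Mlab * car X)%type.

Definition dMX (p q : MX) : R :=
  if Mlab_eq_dec (fst p) (fst q) then dist (snd p) (snd q) / 2 else 1.

Definition glue (p q : MX) : Prop :=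
  (p = (mb, pT X) /\ q = (ma, pL X)) \/
  (p = (ma, pR X) /\ q = (mc, pT X)) \/
  (p = (mc, pL X) /\ q = (mb, pR X)).

Definition glue_eq : MX -> MX -> Prop := clos_refl_sym_trans MX glue.

(* chain x ~ u1, v1 ~ u2, ..., vk ~ y with cost sum d(ui,vi) *)
Fixpoint chain (x y : MX) (l : list (MX * MX)) : Prop :=
  match l with
  | nil => glue_eq x y
  | (u, v) :: l' => glue_eq x u /\ chain v y l'
  end.

Fixpoint chain_cost (l : list (MX * MX)) : R :=
  match l with
  | nil => 0
  | (u, v) :: l' => dMX u v + chain_cost l'
  end.

Definition dq (x y : MX) : R :=
  Rinf (fun r => exists l, chain x y l /\ r = chain_cost l).

Definition Ften : tms :=
  Tms (mid (fun _ : MX => True) dq) mdist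
      (clsT dq (ma, pT X)) (clsT dq (mb, pL X)) (clsT dq (mc, pR X)).

Definition tens (m : Mlab) (x : X) : Ften := clsT dq (m, x).
End Ften.

Definition Fmap (X Y : tms) (f : X -> Y) (z : Ften X) : Ften Y :=
  tens Y (fst (mrep z)) (f (snd (mrep z))).

Inductive Tri := tT | tL | tR.
Definition Tri_eq_dec (x y : Tri) : {x = y} + {x <> y}.
Proof. decide equality. Defined.

Definition dI (x y : Tri) : R := if Tri_eq_dec x y then 0 else 1.
Definition Itms : tms := Tms Tri dI tT tL tR.

Definition bang (z : Itms) : Ften Itms :=
  match z with
  | tT => tens Itms ma tT
  | tL => tens Itms mb tL
  | tR => tens Itms mc tR
  end.

Fixpoint Fn (n : nat) : tms :=
  match n with O => Itms | S k => Ften (Fn k) end.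

Fixpoint emb (n : nat) : Fn n -> Fn (S n) :=
  match n return Fn n -> Fn (S n) with
  | O => bang
  | S k => Fmap (Fn k) (Fn (S k)) (emb k)
  end.

Fixpoint embUp (n k : nat) : Fn n -> Fn (k + n) :=
  match k return Fn n -> Fn (k + n) with
  | O => fun x => x
  | S j => fun x => emb (j + n) (embUp n j x)
  end.

Definition Graw : Type := {n : nat & car (Fn n)}.

(* union metric: compare at the common level n + m *)
Definition dGraw (p q : Graw) : R :=
  match p, q with
  | existT _ n x, existT _ m y =>
      dist (eq_rect _ (fun k => car (Fn k)) (embUp n m x) _ (Nat.add_comm m n))
           (embUp m n y)
  end.

Definition G : tms :=
  Tms (mid (fun _ : Graw => True) dGraw) mdist
      (clsT dGraw (existT _ 0%nat tT)) (clsT dGraw (existT _ 0%nat tL))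
      (clsT dGraw (existT _ 0%nat tR)).

Definition galg (z : Ften G) : G :=
  let m := fst (mrep z) in
  match mrep (snd (mrep z)) with
  | existT _ n x => clsT dGraw (existT (fun k => car (Fn k)) (S n) (tens (Fn n) m x))
  end.

Definition cauchy (u : nat -> G) : Prop :=
  forall eps, 0 < eps -> exists N, forall i j, (N <= i)%nat -> (N <= j)%nat ->
    dist (u i) (u j) < eps.

Definition dS (u v : nat -> G) : R := seq_lim (fun n => dist (u n) (v n)).

Lemma Rinf_nonneg (E : R -> Prop) : (forall x, E x -> 0 <= x) -> 0 <= Rinf E.
Proof.
  intros H; unfold Rinf.
  destruct (excluded_middle_informative _) as [h|_]; [|lra].
  destruct (constructive_indefinite_description _ h) as [l [H1 H2]]; simpl.
  apply H2; exact H.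
Qed.

Lemma Rinf_zero (E : R -> Prop) : E 0 -> (forall x, E x -> 0 <= x) -> Rinf E = 0.
Proof.
  intros H0 H; unfold Rinf.
  destruct (excluded_middle_informative _) as [h|n].
  - destruct (constructive_indefinite_description _ h) as [l [H1 H2]]; simpl.
    assert (l <= 0) by (apply H1; exact H0).
    assert (0 <= l) by (apply H2; exact H). lra.
  - exfalso; apply n; exists 0; split; [exact H|]. intros l' Hl; apply Hl; exact H0.
Qed.

Lemma Fn_nonneg (n : nat) : forall x y : Fn n, 0 <= dist x y.
Proof.
  induction n as [|n IH]; intros x y.
  - simpl; unfold dI; destruct (Tri_eq_dec x y); lra.
  - simpl; unfold mdist, dq. apply Rinf_nonneg.
    intros r [l [_ ->]]. induction l as [|[u v] l IHl]; simpl; [lra|].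
    assert (0 <= dMX (Fn n) u v).
    { unfold dMX; destruct (Mlab_eq_dec _ _); [|lra].
      specialize (IH (snd u) (snd v)); lra. }
    lra.
Qed.

Lemma Fn_self (n : nat) : forall x : Fn n, dist x x = 0.
Proof.
  destruct n as [|n]; intros x.
  - simpl; unfold dI; destruct (Tri_eq_dec x x); congruence.
  - simpl; unfold mdist, dq. apply Rinf_zero.
    + exists nil; split; [apply rst_refl | reflexivity].
    + intros r [l [_ ->]]. induction l as [|[u v] l IHl]; simpl; [lra|].
      assert (0 <= dMX (Fn n) u v).
      { unfold dMX; destruct (Mlab_eq_dec _ _); [|lra].
        pose proof (Fn_nonneg n (snd u) (snd v)); lra. }
      lra.
Qed.

Lemma G_self (x : G) : dist x x = 0.
Proof.
  simpl; unfold mdist. destruct (mrep x) as [n y]; simpl.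
  generalize (Nat.add_comm n n); intro e.
  rewrite (UIP_refl_nat _ e); simpl. apply Fn_self.
Qed.

Lemma const_cauchy (x : G) : cauchy (fun _ => x).
Proof. intros eps H; exists 0%nat; intros; rewrite G_self; exact H. Qed.

Definition S : tms :=
  Tms (mid cauchy dS) mdist
      (mcls cauchy dS _ (const_cauchy (pT G)))
      (mcls cauchy dS _ (const_cauchy (pL G)))
      (mcls cauchy dS _ (const_cauchy (pR G))).

Definition psi (z : Ften S) : S :=
  let m := fst (mrep z) in
  let u := mrep (snd (mrep z)) in
  mcls_or cauchy dS (fun k => galg (tens G m (u k))) (pT S).

Definition s (y : S) : Ften S :=
  match excluded_middle_informative (exists z, psi z = y) with
  | left h => proj1_sig (constructive_indefinite_description _ h)
  | right _ => pT (Ften S)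
  end.

(* The quotient distance on M ⊗ X has a closed form: m ⊗ x and n ⊗ y are
   either compared inside one copy, at cost d(x,y)/2, or joined through the
   junctions where the copies are glued, each leg costing half the distance to
   the glued corner and a detour through the third copy costing 1/2.  From this
   formula M ⊗ - preserves tripointed pseudometric spaces, isometries and
   tripointed maps, scales every copy by exactly 1/2, and depends continuously
   on its data; hence g extends to an isometry ψ of M ⊗ S onto S.  Surjectivity
   of ψ comes from a label used infinitely often by a Cauchy sequence: the
   terms with other labels are close to a junction and can be rewritten in that
   copy.
   For a coalgebra e with e(x) = m ⊗ x', the coalgebra map is the limit of
   f_0 = T, f_{k+1}(x) = ψ(m ⊗ f_k(x')); consecutive approximants differ by at
   most 2^-k, and the same contraction puts any two coalgebra maps within 2^-j
   of each other for every j.  Continuity is proved one precision 2^-j at a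
   time: when e(x) and e(y) are close but carry different labels, x' must be
   the junction corner itself (a point is either equal to a corner or at
   positive distance from it), and continuity at the corners takes over. *)

From Stdlib Require Import Reals Lra List ClassicalEpsilon Relations Eqdep_dec
  FunctionalExtensionality ProofIrrelevance PropExtensionality Classical Lia.
Open Scope R_scope.

Local Notation succ := Datatypes.S.

(** * Metric identification and real limits *)

Section MetricIdentification.
Variables (A : Type) (dom : A -> Prop) (d : A -> A -> R).
Hypothesis d_refl : forall x, dom x -> d x x = 0.
Hypothesis d_sym : forall x y, dom x -> dom y -> d x y = d y x.
Hypothesis d_zero_compat :
  forall x x', dom x -> dom x' -> d x x' = 0 -> forall y, d x y = d x' y.

Lemma mrep_spec (P : mid dom d) :
  dom (mrep P) /\ proj1_sig P = (fun y => d (mrep P) y = 0).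
Proof.
  unfold mrep. destruct (constructive_indefinite_description _ _) as [x [h e]]; simpl.
  split; auto.
Qed.

Lemma mrep_dom (P : mid dom d) : dom (mrep P).
Proof. apply mrep_spec. Qed.

Lemma mid_eq (P Q : mid dom d) : proj1_sig P = proj1_sig Q -> P = Q.
Proof.
  destruct P as [p hp], Q as [q hq]; simpl; intros ->. f_equal. apply proof_irrelevance.
Qed.

Lemma mcls_mrep (P : mid dom d) (h : dom (mrep P)) : P = mcls dom d (mrep P) h.
Proof. apply mid_eq. simpl. apply mrep_spec. Qed.

Lemma mrep_mcls x (h : dom x) : d x (mrep (mcls dom d x h)) = 0.
Proof.
  destruct (mrep_spec (mcls dom d x h)) as [_ e]. simpl in e.
  rewrite (f_equal (fun P => P (mrep (mcls dom d x h))) e). apply d_refl, mrep_dom.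
Qed.

Lemma mdist_mcls x y (hx : dom x) (hy : dom y) :
  mdist (mcls dom d x hx) (mcls dom d y hy) = d x y.
Proof.
  unfold mdist.
  pose proof (mrep_mcls x hx) as Ex. pose proof (mrep_mcls y hy) as Ey.
  set (rx := mrep (mcls dom d x hx)) in *. set (ry := mrep (mcls dom d y hy)) in *.
  assert (Drx : dom rx) by apply mrep_dom. assert (Dry : dom ry) by apply mrep_dom.
  rewrite <- (d_zero_compat x rx hx Drx Ex ry), (d_sym x ry hx Dry).
  rewrite <- (d_zero_compat y ry hy Dry Ey x). apply d_sym; auto.
Qed.

Lemma mcls_eq x y (hx : dom x) (hy : dom y) : d x y = 0 -> mcls dom d x hx = mcls dom d y hy.
Proof.
  intros H. apply mid_eq; simpl. apply functional_extensionality; intros z.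
  apply propositional_extensionality. rewrite (d_zero_compat x y hx hy H z). tauto.
Qed.

Lemma mdist_eq0 (P Q : mid dom d) : mdist P Q = 0 -> P = Q.
Proof.
  intros H. rewrite (mcls_mrep P (mrep_dom P)), (mcls_mrep Q (mrep_dom Q)).
  apply mcls_eq. exact H.
Qed.
End MetricIdentification.

Lemma Rinf_eq (E : R -> Prop) l : is_inf E l -> Rinf E = l.
Proof.
  intros H. unfold Rinf. destruct (excluded_middle_informative _) as [h|n].
  - destruct (constructive_indefinite_description _ h) as [l' [H1 H2]]; simpl.
    destruct H as [H3 H4]. apply Rle_antisym; auto.
  - exfalso; apply n; eauto.
Qed.

Lemma seq_lim_eq u l : Un_cv u l -> seq_lim u = l.
Proof.
  intros H. unfold seq_lim. destruct (excluded_middle_informative _) as [h|n].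
  - destruct (constructive_indefinite_description _ h) as [l' Hl']; simpl.
    eapply UL_sequence; eauto.
  - exfalso; eauto.
Qed.

Lemma cv_const c : Un_cv (fun _ => c) c.
Proof. intros eps H. exists 0%nat. intros. unfold R_dist. rewrite Rminus_diag, Rabs_R0. lra. Qed.

Lemma cv_squeeze (x e : nat -> R) l :
  (forall n, Rabs (x n - l) <= e n) -> Un_cv e 0 -> Un_cv x l.
Proof.
  intros H He eps Heps. destruct (He eps Heps) as [N HN]. exists N. intros n Hn.
  specialize (HN n Hn). unfold R_dist in *. rewrite Rminus_0_r in HN.
  pose proof (H n). pose proof (Rle_abs (e n)). lra.
Qed.

Lemma cv_abs_sub x l : Un_cv x l -> Un_cv (fun n => Rabs (x n - l)) 0.
Proof.
  intros H eps Heps. destruct (H eps Heps) as [N HN]. exists N. intros n Hn.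
  specialize (HN n Hn). unfold R_dist in *. rewrite Rminus_0_r, Rabs_Rabsolu. exact HN.
Qed.

Lemma cv_ge_const u l c : Un_cv u l -> (forall n, c <= u n) -> c <= l.
Proof.
  intros H1 H2. apply (Rle_cv_lim (Un:=fun _ => c) (Vn:=u)); auto. apply cv_const.
Qed.

Lemma cv_le_eventually x l c :
  Un_cv x l -> (exists N, forall k, (N <= k)%nat -> x k <= c) -> l <= c.
Proof.
  intros H [N HN]. apply Rnot_lt_le; intros Hlt.
  destruct (H (l - c)) as [N' HN']; [lra|].
  specialize (HN (N + N')%nat ltac:(lia)). specialize (HN' (N + N')%nat ltac:(lia)).
  unfold R_dist in HN'. apply Rabs_def2 in HN'. lra.
Qed.

Lemma half_pow_lt eps : 0 < eps -> exists j, (/2)^j < eps.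
Proof.
  intros He. destruct (pow_lt_1_zero (/2) ltac:(rewrite Rabs_pos_eq; lra) eps He) as [N HN].
  exists N. specialize (HN N (Nat.le_refl N)). rewrite Rabs_pos_eq in HN; auto.
  apply pow_le; lra.
Qed.

Lemma half_pow_antimono i j : (i <= j)%nat -> (/2)^j <= (/2)^i.
Proof.
  intros H. replace j with ((j - i) + i)%nat by lia. induction (j - i)%nat as [|t IH].
  - simpl plus; lra.
  - change (succ t + i)%nat with (succ (t + i)). simpl pow.
    pose proof (pow_le (/2) (t + i) ltac:(lra)). lra.
Qed.

Lemma eq0_of_le_half_pow r : 0 <= r -> (forall j, r <= (/2)^j) -> r = 0.
Proof.
  intros H0 H. apply Rle_antisym; auto. apply Rnot_lt_le; intros Hr.
  destruct (half_pow_lt r Hr) as [j Hj]. specialize (H j). lra.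
Qed.

Lemma lim_eq0_of_le_half_pow (a : nat -> R) l :
  Un_cv a l -> (forall k, 0 <= a k) -> (forall k, a k <= (/2)^k) -> l = 0.
Proof.
  intros C H0 H1. apply eq0_of_le_half_pow.
  - apply (cv_ge_const a l 0 C H0).
  - intros j. apply (cv_le_eventually a l _ C). exists j. intros k Hk.
    eapply Rle_trans; [apply H1|]. apply half_pow_antimono; lia.
Qed.

(** * The distance of M ⊗ X in closed form *)

Definition min_lab (f : Mlab -> R) : R := Rmin (f ma) (Rmin (f mb) (f mc)).

Lemma min_lab_le f k : min_lab f <= f k.
Proof.
  unfold min_lab. destruct k.
  - apply Rmin_l.
  - eapply Rle_trans; [apply Rmin_r|apply Rmin_l].
  - eapply Rle_trans; [apply Rmin_r|apply Rmin_r].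
Qed.

Lemma min_lab_attained f : exists k, min_lab f = f k.
Proof.
  unfold min_lab, Rmin. destruct (Rle_dec (f mb) (f mc)); destruct (Rle_dec _ _); eauto.
Qed.

(* For k <> m, [corner X m k] is the point of copy m glued into the junction
   opposite copy k (the junction shared by the two copies other than k);
   [corner X m m] is the outer vertex of copy m, i.e. the distinguished point
   m ⊗ T, m ⊗ L or m ⊗ R of M ⊗ X. *)
Definition corner (X : tms) (m k : Mlab) : car X :=
  match m, k with
  | ma, ma => pT X | ma, mb => pR X | ma, mc => pL X
  | mb, mb => pL X | mb, ma => pR X | mb, mc => pT X
  | mc, mc => pR X | mc, ma => pL X | mc, mb => pT X
  end.

Definition third_lab (k k' : Mlab) : Mlab :=
  match k, k' with
  | ma, mb | mb, ma => mc
  | ma, mc | mc, ma => mb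
  | mb, mc | mc, mb => ma
  | _, _ => k
  end.

Lemma third_lab_neq k k' : k <> k' -> third_lab k k' <> k /\ third_lab k k' <> k'.
Proof. destruct k, k'; simpl; intuition discriminate. Qed.

Lemma third_lab_unique k k' j : k <> k' -> j <> k -> j <> k' -> j = third_lab k k'.
Proof. destruct k, k', j; simpl; intuition congruence. Qed.

(* Closed form of the quotient distance on M ⊗ X between (m, x) and (n, y),
   given d(x, y) and the distances [dx], [dy] of x and y to the corners of
   their copies.  A route enters junction k from copy m, leaves at junction k'
   into copy n, and moves from k to k' inside the third copy; a leg towards
   the outer vertex is capped at 1, which never beats the direct cost. *)
Definition leg_cost (m k : Mlab) (dk : R) : R := if Mlab_eq_dec m k then 1 else dk / 2.
Definition hop_cost (k k' : Mlab) : R := if Mlab_eq_dec k k' then 0 else / 2.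
Definition route_cost (m n : Mlab) (dx dy : Mlab -> R) (k k' : Mlab) : R :=
  leg_cost m k (dx k) + hop_cost k k' + leg_cost n k' (dy k').
Definition direct_cost (m n : Mlab) (dxy : R) : R :=
  if Mlab_eq_dec m n then dxy / 2 else 1.
Definition tform (m n : Mlab) (dxy : R) (dx dy : Mlab -> R) : R :=
  Rmin (direct_cost m n dxy)
       (min_lab (fun k => min_lab (fun k' => route_cost m n dx dy k k'))).

Lemma tform_le_direct m n dxy dx dy : tform m n dxy dx dy <= direct_cost m n dxy.
Proof. apply Rmin_l. Qed.

Lemma tform_le_route m n dxy dx dy k k' : tform m n dxy dx dy <= route_cost m n dx dy k k'.
Proof.
  eapply Rle_trans; [apply Rmin_r|].
  eapply Rle_trans; [apply (min_lab_le _ k)|]. apply (min_lab_le _ k').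
Qed.

Lemma tform_cases m n dxy dx dy :
  tform m n dxy dx dy = direct_cost m n dxy \/
  exists k k', tform m n dxy dx dy = route_cost m n dx dy k k'.
Proof.
  unfold tform, Rmin. destruct (Rle_dec _ _); [left; auto|right].
  destruct (min_lab_attained (fun k => min_lab (fun k' => route_cost m n dx dy k k')))
    as [k ->].
  destruct (min_lab_attained (fun k' => route_cost m n dx dy k k')) as [k' ->]. eauto.
Qed.

Lemma tform_glb m n dxy dx dy r :
  r <= direct_cost m n dxy -> (forall k k', r <= route_cost m n dx dy k k') ->
  r <= tform m n dxy dx dy.
Proof. intros H1 H2. destruct (tform_cases m n dxy dx dy) as [->|[k [k' ->]]]; auto. Qed.

Definition sum_lab (f : Mlab -> R) := f ma + f mb + f mc.

Lemma le_sum_lab f k : (forall j, 0 <= f j) -> f k <= sum_lab f.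
Proof.
  intros H; unfold sum_lab; pose proof (H ma); pose proof (H mb); pose proof (H mc).
  destruct k; lra.
Qed.

Lemma sum_lab_ge0 f : (forall j, 0 <= f j) -> 0 <= sum_lab f.
Proof.
  intros H; unfold sum_lab; pose proof (H ma); pose proof (H mb); pose proof (H mc); lra.
Qed.

Definition tform_data_gap (a a' : R) (b b' c c' : Mlab -> R) :=
  Rabs (a - a') + sum_lab (fun k => Rabs (b k - b' k)) + sum_lab (fun k => Rabs (c k - c' k)).

Lemma tform_data_gap_sym a a' b b' c c' :
  tform_data_gap a a' b b' c c' = tform_data_gap a' a b' b c' c.
Proof.
  unfold tform_data_gap, sum_lab.
  rewrite (Rabs_minus_sym a), (Rabs_minus_sym (b ma)), (Rabs_minus_sym (b mb)),
    (Rabs_minus_sym (b mc)), (Rabs_minus_sym (c ma)), (Rabs_minus_sym (c mb)),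
    (Rabs_minus_sym (c mc)).
  reflexivity.
Qed.

Lemma tform_lipschitz m n a a' b b' c c' :
  tform m n a b c <= tform m n a' b' c' + tform_data_gap a a' b b' c c'.
Proof.
  unfold tform_data_gap.
  assert (Hb : forall k, Rabs (b k - b' k) <= sum_lab (fun k => Rabs (b k - b' k)))
    by (intros; apply (le_sum_lab (fun k => Rabs (b k - b' k))); intros; apply Rabs_pos).
  assert (Hc : forall k, Rabs (c k - c' k) <= sum_lab (fun k => Rabs (c k - c' k)))
    by (intros; apply (le_sum_lab (fun k => Rabs (c k - c' k))); intros; apply Rabs_pos).
  pose proof (sum_lab_ge0 (fun k => Rabs (b k - b' k)) (fun _ => Rabs_pos _)).
  pose proof (sum_lab_ge0 (fun k => Rabs (c k - c' k)) (fun _ => Rabs_pos _)).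
  pose proof (Rabs_pos (a - a')). pose proof (Rle_abs (a - a')).
  destruct (tform_cases m n a' b' c') as [E|[k [k' E]]]; rewrite E.
  - eapply Rle_trans; [apply tform_le_direct|]. unfold direct_cost.
    destruct (Mlab_eq_dec m n); lra.
  - eapply Rle_trans; [apply (tform_le_route _ _ _ _ _ k k')|]. unfold route_cost, leg_cost.
    specialize (Hb k). specialize (Hc k'). pose proof (Rle_abs (b k - b' k)).
    pose proof (Rle_abs (c k' - c' k')).
    destruct (Mlab_eq_dec m k), (Mlab_eq_dec n k'); lra.
Qed.

Lemma tform_cv m n (a : nat -> R) la (b : nat -> Mlab -> R) lb c lc :
  Un_cv a la -> (forall k, Un_cv (fun i => b i k) (lb k)) ->
  (forall k, Un_cv (fun i => c i k) (lc k)) ->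
  Un_cv (fun i => tform m n (a i) (b i) (c i)) (tform m n la lb lc).
Proof.
  intros Ha Hb Hc.
  apply cv_squeeze with (e := fun i => tform_data_gap (a i) la (b i) lb (c i) lc).
  - intros i. apply Rabs_le. split.
    + pose proof (tform_lipschitz m n la (a i) lb (b i) lc (c i)) as H.
      rewrite tform_data_gap_sym in H. lra.
    + pose proof (tform_lipschitz m n (a i) la (b i) lb (c i) lc). lra.
  - assert (Hsum : forall f : nat -> Mlab -> R, (forall k, Un_cv (fun i => f i k) 0) ->
                   Un_cv (fun i => sum_lab (f i)) 0).
    { intros f H. unfold sum_lab. replace 0 with (0 + 0 + 0) by ring.
      apply CV_plus; [apply CV_plus|]; apply H. }
    unfold tform_data_gap. replace 0 with (0 + 0 + 0) by ring.
    apply CV_plus; [apply CV_plus|].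
    + apply cv_abs_sub; auto.
    + apply (Hsum (fun i k => Rabs (b i k - lb k))). intros; apply cv_abs_sub; auto.
    + apply (Hsum (fun i k => Rabs (c i k - lc k))). intros; apply cv_abs_sub; auto.
Qed.

Lemma leg_cost_ge0 m k d : 0 <= d -> 0 <= leg_cost m k d.
Proof. unfold leg_cost; destruct (Mlab_eq_dec m k); lra. Qed.

Lemma hop_cost_ge0 k k' : 0 <= hop_cost k k'.
Proof. unfold hop_cost; destruct (Mlab_eq_dec k k'); lra. Qed.

Lemma hop_cost_sym k k' : hop_cost k k' = hop_cost k' k.
Proof. unfold hop_cost; destruct (Mlab_eq_dec k k'), (Mlab_eq_dec k' k); congruence || lra. Qed.

Lemma hop_cost_tri k1 k2 k3 : hop_cost k1 k3 <= hop_cost k1 k2 + hop_cost k2 k3.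
Proof.
  unfold hop_cost; destruct (Mlab_eq_dec k1 k3), (Mlab_eq_dec k1 k2), (Mlab_eq_dec k2 k3);
    subst; try congruence; lra.
Qed.

Record is_ptms (X : tms) : Prop := {
  ptms_ge0 : forall x y : X, 0 <= dist x y;
  ptms_refl : forall x : X, dist x x = 0;
  ptms_sym : forall x y : X, dist x y = dist y x;
  ptms_tri : forall x y z : X, dist x z <= dist x y + dist y z;
  ptms_le1 : forall x y : X, dist x y <= 1;
  ptms_TL : dist (pT X) (pL X) = 1;
  ptms_TR : dist (pT X) (pR X) = 1;
  ptms_LR : dist (pL X) (pR X) = 1 }.
Arguments ptms_ge0 {X}. Arguments ptms_refl {X}. Arguments ptms_sym {X}.
Arguments ptms_tri {X}. Arguments ptms_le1 {X}.
Arguments ptms_TL {X}. Arguments ptms_TR {X}. Arguments ptms_LR {X}.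

Definition separated (X : tms) : Prop := forall x y : X, dist x y = 0 -> x = y.

Definition tdist (X : tms) (p q : MX X) : R :=
  tform (fst p) (fst q) (dist (snd p) (snd q))
    (fun k => dist (snd p) (corner X (fst p) k))
    (fun k => dist (snd q) (corner X (fst q) k)).

Section TensorDistance.
Variable X : tms.
Hypothesis HX : is_ptms X.

Lemma corner_dist m k k' : k <> k' -> dist (corner X m k) (corner X m k') = 1.
Proof.
  destruct HX as [_ _ Hsym _ _ HTL HTR HLR]. intros H.
  destruct m, k, k'; simpl; try congruence; rewrite ?Hsym; auto.
Qed.

Lemma hop_cost_le_legs m k1 k2 (y : X) :
  hop_cost k1 k2 <= leg_cost m k1 (dist y (corner X m k1)) + leg_cost m k2 (dist y (corner X m k2)).
Proof.
  pose proof (ptms_ge0 HX y (corner X m k1)). pose proof (ptms_ge0 HX y (corner X m k2)).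
  unfold hop_cost, leg_cost.
  destruct (Mlab_eq_dec k1 k2), (Mlab_eq_dec m k1), (Mlab_eq_dec m k2); try lra.
  pose proof (corner_dist m k1 k2 n).
  pose proof (ptms_tri HX (corner X m k1) y (corner X m k2)) as T.
  rewrite (ptms_sym HX (corner X m k1) y) in T. lra.
Qed.

Lemma route_cost_ge0 (p q : MX X) k k' :
  0 <= route_cost (fst p) (fst q) (fun k => dist (snd p) (corner X (fst p) k))
         (fun k => dist (snd q) (corner X (fst q) k)) k k'.
Proof.
  unfold route_cost. pose proof (hop_cost_ge0 k k').
  pose proof (leg_cost_ge0 (fst p) k _ (ptms_ge0 HX (snd p) (corner X (fst p) k))).
  pose proof (leg_cost_ge0 (fst q) k' _ (ptms_ge0 HX (snd q) (corner X (fst q) k'))). lra.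
Qed.

Lemma tdist_ge0 p q : 0 <= tdist X p q.
Proof.
  apply tform_glb; [|intros; apply route_cost_ge0].
  unfold direct_cost. destruct (Mlab_eq_dec _ _); [pose proof (ptms_ge0 HX (snd p) (snd q))|]; lra.
Qed.

Lemma tdist_le_dMX p q : tdist X p q <= dMX X p q.
Proof. apply tform_le_direct. Qed.

Lemma dMX_same_lab m x y : dMX X (m, x) (m, y) = dist x y / 2.
Proof. unfold dMX; simpl. destruct (Mlab_eq_dec m m); congruence. Qed.

Lemma tdist_refl p : tdist X p p = 0.
Proof.
  apply Rle_antisym; [|apply tdist_ge0]. destruct p as [m x].
  eapply Rle_trans; [apply tdist_le_dMX|]. rewrite dMX_same_lab, (ptms_refl HX). lra.
Qed.

Lemma tdist_le_junction p q k : fst p <> k -> fst q <> k ->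
  tdist X p q <= dist (snd p) (corner X (fst p) k) / 2 + dist (snd q) (corner X (fst q) k) / 2.
Proof.
  intros H1 H2. eapply Rle_trans; [apply (tform_le_route _ _ _ _ _ k k)|].
  unfold route_cost, leg_cost, hop_cost.
  destruct (Mlab_eq_dec (fst p) k); [congruence|].
  destruct (Mlab_eq_dec k k); [|congruence].
  destruct (Mlab_eq_dec (fst q) k); [congruence|]. lra.
Qed.

Lemma tdist_le1 p q : tdist X p q <= 1.
Proof.
  destruct p as [m x], q as [n y]. eapply Rle_trans; [apply tdist_le_dMX|].
  unfold dMX; simpl. pose proof (ptms_le1 HX x y). pose proof (ptms_ge0 HX x y).
  destruct (Mlab_eq_dec m n); lra.
Qed.

Lemma tdist_sym p q : tdist X p q = tdist X q p.
Proof.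
  assert (H : forall p q, tdist X p q <= tdist X q p).
  { clear p q. intros p q. unfold tdist at 2.
    destruct (tform_cases (fst q) (fst p) (dist (snd q) (snd p))
      (fun k => dist (snd q) (corner X (fst q) k)) (fun k => dist (snd p) (corner X (fst p) k)))
      as [E|[k [k' E]]]; rewrite E.
    - eapply Rle_trans; [apply tform_le_direct|]. unfold direct_cost.
      rewrite (ptms_sym HX (snd p) (snd q)).
      destruct (Mlab_eq_dec (fst p) (fst q)), (Mlab_eq_dec (fst q) (fst p));
        subst; try congruence; lra.
    - eapply Rle_trans; [apply (tform_le_route _ _ _ _ _ k' k)|].
      unfold route_cost. rewrite (hop_cost_sym k k'). lra. }
  apply Rle_antisym; apply H.
Qed.

Lemma tdist_cases m n x y :
  tdist X (m,x) (n,y) = direct_cost m n (dist x y) \/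
  exists k k', tdist X (m,x) (n,y) = route_cost m n (fun k => dist x (corner X m k))
                                        (fun k => dist y (corner X n k)) k k'.
Proof. apply tform_cases. Qed.

Lemma tdist_le_route m n x y k k' :
  tdist X (m,x) (n,y) <= route_cost m n (fun k => dist x (corner X m k))
                            (fun k => dist y (corner X n k)) k k'.
Proof. apply tform_le_route. Qed.

Lemma tdist_le_direct m n x y : tdist X (m,x) (n,y) <= direct_cost m n (dist x y).
Proof. apply tform_le_direct. Qed.

Lemma tdist_tri p q r : tdist X p r <= tdist X p q + tdist X q r.
Proof.
  destruct p as [m x], q as [n y], r as [o z].
  pose proof (ptms_ge0 HX) as NN. pose proof (ptms_tri HX) as TRI.
  pose proof (tdist_ge0 (m,x) (n,y)). pose proof (tdist_ge0 (n,y) (o,z)).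
  pose proof (tdist_le1 (m,x) (o,z)).
  destruct (tdist_cases n o y z) as [E2|[k2 [k2' E2]]]; rewrite E2.
  - unfold direct_cost. destruct (Mlab_eq_dec n o) as [<-|]; [|lra].
    destruct (tdist_cases m n x y) as [E1|[k1 [k1' E1]]]; rewrite E1.
    + unfold direct_cost. destruct (Mlab_eq_dec m n) as [<-|]; [|pose proof (NN y z); lra].
      eapply Rle_trans; [apply tdist_le_direct|]. unfold direct_cost.
      destruct (Mlab_eq_dec m m); [|congruence]. pose proof (TRI x y z); lra.
    + eapply Rle_trans; [apply (tdist_le_route _ _ _ _ k1 k1')|].
      unfold route_cost, leg_cost.
      destruct (Mlab_eq_dec n k1'); pose proof (NN y z); [lra|].
      pose proof (TRI z y (corner X n k1')) as T. rewrite (ptms_sym HX z y) in T. lra.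
  - destruct (tdist_cases m n x y) as [E1|[k1 [k1' E1]]]; rewrite E1.
    + unfold direct_cost. destruct (Mlab_eq_dec m n) as [<-|];
        [|pose proof (route_cost_ge0 (n,y) (o,z) k2 k2'); simpl in *; lra].
      eapply Rle_trans; [apply (tdist_le_route _ _ _ _ k2 k2')|].
      unfold route_cost, leg_cost.
      destruct (Mlab_eq_dec m k2); pose proof (NN x y); [lra|].
      pose proof (TRI x y (corner X m k2)). lra.
    + eapply Rle_trans; [apply (tdist_le_route _ _ _ _ k1 k2')|]. unfold route_cost.
      pose proof (hop_cost_le_legs n k1' k2 y). pose proof (hop_cost_tri k1 k1' k2).
      pose proof (hop_cost_tri k1 k2 k2'). lra.
Qed.

Lemma tdist_eq0_compat_l p p' q : tdist X p p' = 0 -> tdist X p q = tdist X p' q.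
Proof.
  intros H. pose proof (tdist_tri p p' q). pose proof (tdist_tri p' p q).
  pose proof (tdist_sym p p'). lra.
Qed.

Lemma tdist_eq0_compat_r p q q' : tdist X q q' = 0 -> tdist X p q = tdist X p q'.
Proof.
  intros H. rewrite (tdist_sym p q), (tdist_sym p q'). apply tdist_eq0_compat_l; auto.
Qed.

Lemma tdist_glue_eq p q : glue_eq X p q -> tdist X p q = 0.
Proof.
  induction 1 as [p q Hg| p | p q _ IH | p q r _ IH1 _ IH2].
  - apply Rle_antisym; [|apply tdist_ge0].
    destruct Hg as [[-> ->]|[[-> ->]|[-> ->]]];
      [ eapply Rle_trans; [apply (tdist_le_junction _ _ mc); simpl; discriminate|]
      | eapply Rle_trans; [apply (tdist_le_junction _ _ mb); simpl; discriminate|]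
      | eapply Rle_trans; [apply (tdist_le_junction _ _ ma); simpl; discriminate|] ];
      simpl; rewrite !(ptms_refl HX); lra.
  - apply tdist_refl.
  - rewrite tdist_sym; auto.
  - apply Rle_antisym; [|apply tdist_ge0]. pose proof (tdist_tri p q r). lra.
Qed.

Lemma tdist_le_chain_cost p q l : chain X p q l -> tdist X p q <= chain_cost X l.
Proof.
  revert p. induction l as [|[u v] l IH]; intros p H; simpl in *.
  - rewrite tdist_glue_eq; auto. lra.
  - destruct H as [H1 H2]. pose proof (tdist_glue_eq _ _ H1). pose proof (IH _ H2).
    pose proof (tdist_le_dMX u v). pose proof (tdist_tri p u q). pose proof (tdist_tri u v q).
    lra.
Qed.

Lemma glue_eq_junction m1 m2 k : m1 <> k -> m2 <> k ->
  glue_eq X (m1, corner X m1 k) (m2, corner X m2 k).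
Proof.
  intros H1 H2. unfold glue_eq.
  destruct m1, m2, k; try congruence; try apply rst_refl;
  solve [ apply rst_step; unfold glue; intuition
        | apply rst_sym, rst_step; unfold glue; intuition ].
Qed.

Lemma tdist_direct_or_junctions m n x y :
  tdist X (m,x) (n,y) = dMX X (m,x) (n,y) \/
  exists k k', m <> k /\ n <> k' /\
    tdist X (m,x) (n,y) = dist x (corner X m k) / 2 + hop_cost k k' + dist y (corner X n k') / 2.
Proof.
  pose proof (tdist_le_dMX (m,x) (n,y)) as Hle.
  pose proof (ptms_le1 HX x y). pose proof (ptms_ge0 HX x (corner X m m)).
  pose proof (ptms_ge0 HX y (corner X n n)).
  assert (Hdir : tdist X (m,x) (n,y) >= 1 -> tdist X (m,x) (n,y) = dMX X (m,x) (n,y)).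
  { intros. unfold dMX in *; simpl in *. destruct (Mlab_eq_dec m n); lra. }
  destruct (tdist_cases m n x y) as [E|[k [k' E]]].
  - left. rewrite E. unfold direct_cost, dMX; reflexivity.
  - pose proof (hop_cost_ge0 k k').
    pose proof (leg_cost_ge0 m k _ (ptms_ge0 HX x (corner X m k))).
    pose proof (leg_cost_ge0 n k' _ (ptms_ge0 HX y (corner X n k'))).
    rewrite E in Hdir. unfold route_cost, leg_cost in *.
    destruct (Mlab_eq_dec m k), (Mlab_eq_dec n k');
      try (left; rewrite E; apply Hdir; lra).
    right. exists k, k'. auto.
Qed.

Lemma tdist_attained_by_chain p q : exists l, chain X p q l /\ chain_cost X l = tdist X p q.
Proof.
  destruct p as [m x], q as [n y].
  destruct (tdist_direct_or_junctions m n x y) as [->|[k [k' [Hk [Hk' ->]]]]].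
  - exists (((m,x),(n,y)) :: nil). simpl. split; [split; apply rst_refl|lra].
  - unfold hop_cost. destruct (Mlab_eq_dec k k') as [<-|Hkk'].
    + exists (((m,x),(m, corner X m k)) :: ((n, corner X n k), (n,y)) :: nil). simpl. split.
      * split; [apply rst_refl|]. split; [apply glue_eq_junction; auto|apply rst_refl].
      * rewrite !dMX_same_lab, (ptms_sym HX (corner X n k) y). lra.
    + set (j := third_lab k k'). destruct (third_lab_neq k k' Hkk') as [j1 j2].
      exists (((m,x),(m, corner X m k)) :: ((j, corner X j k), (j, corner X j k'))
              :: ((n, corner X n k'), (n,y)) :: nil). simpl. split.
      * split; [apply rst_refl|]. split; [apply glue_eq_junction; auto|].
        split; [apply glue_eq_junction; auto|apply rst_refl].
      * rewrite !dMX_same_lab, (corner_dist j k k' Hkk'), (ptms_sym HX (corner X n k') y). lra.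
Qed.

Lemma dq_tdist p q : dq X p q = tdist X p q.
Proof.
  unfold dq. apply Rinf_eq. split.
  - intros r [l [H ->]]. apply tdist_le_chain_cost; auto.
  - intros l' H. destruct (tdist_attained_by_chain p q) as [l [H1 H2]]. apply H. exists l; auto.
Qed.

Lemma tdist_same_lab m x y : tdist X (m,x) (m,y) = dist x y / 2.
Proof.
  apply Rle_antisym.
  - eapply Rle_trans; [apply tdist_le_dMX|]. rewrite dMX_same_lab; lra.
  - apply tform_glb; simpl.
    + unfold direct_cost. destruct (Mlab_eq_dec m m); [lra|congruence].
    + intros k k'. unfold route_cost, leg_cost, hop_cost.
      pose proof (ptms_le1 HX x y). pose proof (ptms_ge0 HX x (corner X m k)).
      pose proof (ptms_ge0 HX y (corner X m k')).
      destruct (Mlab_eq_dec m k), (Mlab_eq_dec k k'), (Mlab_eq_dec m k'); subst; try lra.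
      pose proof (ptms_tri HX x (corner X m k') y).
      rewrite (ptms_sym HX (corner X m k') y) in *. lra.
Qed.

(* Below 1/2 no detour through a third copy is possible: two points of
   different copies are then joined through the junction of their copies. *)
Lemma tdist_lt_half m n x y : tdist X (m,x) (n,y) < /2 ->
  (m = n /\ dist x y = 2 * tdist X (m,x) (n,y)) \/
  (m <> n /\
   tdist X (m,x) (n,y) = dist x (corner X m (third_lab m n)) / 2
                         + dist y (corner X n (third_lab m n)) / 2).
Proof.
  intros H. destruct (Mlab_eq_dec m n) as [<-|Hmn].
  - left. split; [reflexivity|]. rewrite tdist_same_lab. lra.
  - right. split; auto.
    destruct (tdist_cases m n x y) as [E|[k [k' E]]]; rewrite E in *.
    + unfold direct_cost in H. destruct (Mlab_eq_dec m n); [congruence|lra].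
    + unfold route_cost, leg_cost, hop_cost in *.
      pose proof (ptms_ge0 HX x (corner X m k)). pose proof (ptms_ge0 HX y (corner X n k')).
      destruct (Mlab_eq_dec m k), (Mlab_eq_dec n k'), (Mlab_eq_dec k k') as [<-|]; try lra.
      rewrite <- (third_lab_unique m n k); auto. lra.
Qed.

Lemma tdist_eq0 m n x y : tdist X (m,x) (n,y) = 0 ->
  (m = n /\ dist x y = 0) \/
  (m <> n /\ dist x (corner X m (third_lab m n)) = 0 /\
   dist y (corner X n (third_lab m n)) = 0).
Proof.
  intros H. pose proof (ptms_ge0 HX x (corner X m (third_lab m n))).
  pose proof (ptms_ge0 HX y (corner X n (third_lab m n))).
  destruct (tdist_lt_half m n x y) as [[e1 e2]|[h1 h2]]; [lra|left|right];
    repeat split; auto; lra.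
Qed.

Lemma tdist_outer m n : m <> n -> tdist X (m, corner X m m) (n, corner X n n) = 1.
Proof.
  intros H. apply Rle_antisym; [apply tdist_le1|].
  assert (Hout : forall m k, 1/2 <= leg_cost m k (dist (corner X m m) (corner X m k))).
  { intros m' k. unfold leg_cost. destruct (Mlab_eq_dec m' k); [lra|].
    rewrite (corner_dist m' m' k); auto. lra. }
  apply tform_glb; simpl.
  - unfold direct_cost. destruct (Mlab_eq_dec m n); [congruence|lra].
  - intros k k'. unfold route_cost. pose proof (Hout m k). pose proof (Hout n k').
    pose proof (hop_cost_ge0 k k'). lra.
Qed.
End TensorDistance.

(** * The functor M ⊗ - *)

Section TensorSpace.
Variable X : tms.
Hypothesis HX : is_ptms X.

Lemma dq_eq0_compat p p' : dq X p p' = 0 -> forall q, dq X p q = dq X p' q.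
Proof.
  intros H q. rewrite !dq_tdist in *; auto. apply tdist_eq0_compat_l; auto.
Qed.

Lemma tens_dist m n x y : dist (tens X m x) (tens X n y) = tdist X (m,x) (n,y).
Proof.
  unfold tens, clsT. simpl. rewrite <- dq_tdist; auto. apply mdist_mcls.
  - intros; rewrite dq_tdist; auto; apply tdist_refl; auto.
  - intros; rewrite !dq_tdist; auto; apply tdist_sym; auto.
  - intros; apply dq_eq0_compat; auto.
Qed.

Lemma tens_mrep (z : Ften X) : tens X (fst (mrep z)) (snd (mrep z)) = z.
Proof.
  unfold tens, clsT. rewrite <- surjective_pairing. symmetry. apply mcls_mrep.
Qed.

Lemma tens_eq m n x y : tdist X (m,x) (n,y) = 0 -> tens X m x = tens X n y.
Proof.
  intros H. apply mcls_eq; [intros; apply dq_eq0_compat; auto|]. rewrite dq_tdist; auto.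
Qed.

Lemma tdist_mrep_tens m x : tdist X (m,x) (mrep (tens X m x)) = 0.
Proof.
  rewrite <- dq_tdist; auto. apply mrep_mcls.
  intros; rewrite dq_tdist; auto; apply tdist_refl; auto.
Qed.

Lemma Ften_dist (z w : Ften X) : dist z w = tdist X (mrep z) (mrep w).
Proof. apply dq_tdist; auto. Qed.

Lemma Ften_ptms : is_ptms (Ften X).
Proof.
  assert (Hout : forall m n, m <> n ->
            dist (tens X m (corner X m m)) (tens X n (corner X n n)) = 1).
  { intros. rewrite tens_dist. apply tdist_outer; auto. }
  constructor.
  - intros; rewrite Ften_dist; apply tdist_ge0; auto.
  - intros; rewrite Ften_dist; apply tdist_refl; auto.
  - intros; rewrite !Ften_dist; apply tdist_sym; auto.
  - intros; rewrite !Ften_dist; apply tdist_tri; auto.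
  - intros; rewrite Ften_dist; apply tdist_le1; auto.
  - exact (Hout ma mb ltac:(discriminate)).
  - exact (Hout ma mc ltac:(discriminate)).
  - exact (Hout mb mc ltac:(discriminate)).
Qed.

Lemma Ften_separated : separated (Ften X).
Proof. intros z w H. apply mdist_eq0 in H; auto. intros; apply dq_eq0_compat; auto. Qed.

Lemma tens_junction m n k : m <> k -> n <> k ->
  tens X m (corner X m k) = tens X n (corner X n k).
Proof.
  intros H1 H2. apply tens_eq. apply Rle_antisym; [|apply tdist_ge0; auto].
  eapply Rle_trans; [apply tdist_le_junction; eauto|]. simpl. rewrite !(ptms_refl HX). lra.
Qed.
End TensorSpace.

Definition isometric (X Y : tms) (h : X -> Y) := forall x y, dist (h x) (h y) = dist x y.

Lemma tripointed_corner (X Y : tms) (h : X -> Y) :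
  tripointed X Y h -> forall m k, h (corner X m k) = corner Y m k.
Proof. intros [e1 [e2 e3]] m k; destruct m, k; simpl; auto. Qed.

Section TensorMap.
Variables (X Y : tms) (h : X -> Y).
Hypotheses (HX : is_ptms X) (SX : separated X) (HY : is_ptms Y).
Hypothesis Th : tripointed X Y h.

Lemma Fmap_tens m x : Fmap X Y h (tens X m x) = tens Y m (h x).
Proof.
  unfold Fmap. pose proof (tdist_mrep_tens X HX m x) as E.
  destruct (mrep (tens X m x)) as [n y]; simpl.
  destruct (tdist_eq0 X HX m n x y E) as [[<- e]|[Hmn [e1 e2]]].
  - apply SX in e. subst; auto.
  - apply SX in e1. apply SX in e2. subst.
    rewrite !(tripointed_corner X Y h Th). destruct (third_lab_neq m n Hmn).
    apply tens_junction; auto; congruence.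
Qed.

Lemma Fmap_tripointed : tripointed (Ften X) (Ften Y) (Fmap X Y h).
Proof.
  unfold tripointed.
  change (pT (Ften X)) with (tens X ma (pT X)).
  change (pL (Ften X)) with (tens X mb (pL X)).
  change (pR (Ften X)) with (tens X mc (pR X)).
  rewrite !Fmap_tens. destruct Th as [-> [-> ->]]. repeat split.
Qed.

Lemma tdist_isometric_image : isometric X Y h ->
  forall m n x y, tdist Y (m, h x) (n, h y) = tdist X (m,x) (n,y).
Proof.
  intros I m n x y. unfold tdist; simpl. rewrite I.
  assert (Hc : forall (z : X) o, (fun k => dist (h z) (corner Y o k)) =
                                 (fun k => dist z (corner X o k))).
  { intros z o. apply functional_extensionality; intros k.
    rewrite <- (tripointed_corner X Y h Th), I; auto. }
  rewrite !Hc. reflexivity.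
Qed.

Lemma Fmap_isometric : isometric X Y h -> isometric (Ften X) (Ften Y) (Fmap X Y h).
Proof.
  intros I z w.
  rewrite <- (tens_mrep X z), <- (tens_mrep X w), !Fmap_tens, !tens_dist; auto.
  apply tdist_isometric_image; auto.
Qed.
End TensorMap.

Lemma Itms_ptms : is_ptms Itms.
Proof.
  constructor; simpl; unfold dI.
  - intros x y; destruct (Tri_eq_dec x y); lra.
  - intros x; destruct (Tri_eq_dec x x); [lra|congruence].
  - intros x y; destruct (Tri_eq_dec x y), (Tri_eq_dec y x); subst; try congruence; lra.
  - intros x y z; destruct (Tri_eq_dec x z), (Tri_eq_dec x y), (Tri_eq_dec y z); subst;
      try congruence; lra.
  - intros x y; destruct (Tri_eq_dec x y); lra.
  - reflexivity.
  - reflexivity.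
  - reflexivity.
Qed.

Lemma Itms_separated : separated Itms.
Proof. intros x y; simpl; unfold dI; destruct (Tri_eq_dec x y); auto. intros; lra. Qed.

Lemma bang_isometric : isometric Itms (Ften Itms) bang.
Proof.
  assert (Hb : forall z, let m := match z with tT => ma | tL => mb | tR => mc end in
                         bang z = tens Itms m (corner Itms m m)).
  { destruct z; reflexivity. }
  intros x y. rewrite !Hb, tens_dist by exact Itms_ptms.
  destruct x, y; simpl;
    solve [ rewrite tdist_refl by exact Itms_ptms; reflexivity
          | apply tdist_outer; [exact Itms_ptms|discriminate] ].
Qed.

Lemma Fn_ptms_separated n : is_ptms (Fn n) /\ separated (Fn n).
Proof.
  induction n as [|n [P M]]; split.
  - exact Itms_ptms.
  - exact Itms_separated.
  - apply Ften_ptms; auto.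
  - apply Ften_separated; auto.
Qed.

Lemma Fn_ptms n : is_ptms (Fn n). Proof. apply Fn_ptms_separated. Qed.
Lemma Fn_separated n : separated (Fn n). Proof. apply Fn_ptms_separated. Qed.

Lemma emb_tripointed_isometric n :
  tripointed (Fn n) (Fn (succ n)) (emb n) /\ isometric (Fn n) (Fn (succ n)) (emb n).
Proof.
  induction n as [|n [T I]].
  - split; [repeat split|exact bang_isometric].
  - simpl emb. split.
    + exact (Fmap_tripointed _ _ _ (Fn_ptms n) (Fn_separated n) (Fn_ptms (succ n)) T).
    + exact (Fmap_isometric _ _ _ (Fn_ptms n) (Fn_separated n) (Fn_ptms (succ n)) T I).
Qed.

Lemma emb_tripointed n : tripointed _ _ (emb n). Proof. apply emb_tripointed_isometric. Qed.
Lemma emb_isometric n : isometric _ _ (emb n). Proof. apply emb_tripointed_isometric. Qed.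

(** * The initial algebra G *)

Definition castFn {i j : nat} (e : i = j) (x : Fn i) : Fn j :=
  eq_rect i (fun k => car (Fn k)) x j e.

(* [lift_to N n x] is the image of x : F^n I in F^N I under the embeddings,
   meaningful only for n <= N (otherwise an arbitrary point). *)
Fixpoint lift_to (N : nat) : forall n, Fn n -> Fn N :=
  match N return forall n, Fn n -> Fn N with
  | O => fun n x => match Nat.eq_dec n 0 with left e => castFn e x | right _ => tT end
  | succ N' => fun n x => match Nat.eq_dec n (succ N') with
        | left e => castFn e x | right _ => emb N' (lift_to N' n x) end
  end.

Lemma lift_to_id n (x : Fn n) : lift_to n n x = x.
Proof.
  destruct n; [reflexivity|]. cbn [lift_to].
  destruct (Nat.eq_dec _ _) as [e|]; [|congruence].
  rewrite (UIP_refl_nat _ e); reflexivity.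
Qed.

Lemma lift_to_succ N n (x : Fn n) : (n <= N)%nat -> lift_to (succ N) n x = emb N (lift_to N n x).
Proof. intros H. cbn [lift_to]. destruct (Nat.eq_dec _ _); [lia|reflexivity]. Qed.

Lemma lift_to_embUp n j (x : Fn n) : lift_to (j + n) n x = embUp n j x.
Proof.
  induction j as [|j IH].
  - apply lift_to_id.
  - change (succ j + n)%nat with (succ (j + n)). rewrite lift_to_succ by lia. rewrite IH.
    reflexivity.
Qed.

Lemma dist_lift_to_add N t n (x : Fn n) m (y : Fn m) : (n <= N)%nat -> (m <= N)%nat ->
  dist (lift_to (t + N) n x) (lift_to (t + N) m y) = dist (lift_to N n x) (lift_to N m y).
Proof.
  intros H1 H2. induction t as [|t IH]; [reflexivity|].
  simpl plus. rewrite !lift_to_succ by lia. rewrite emb_isometric. exact IH.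
Qed.

Lemma dist_lift_to_indep N1 N2 n (x : Fn n) m (y : Fn m) :
  (n <= N1)%nat -> (m <= N1)%nat -> (n <= N2)%nat -> (m <= N2)%nat ->
  dist (lift_to N1 n x) (lift_to N1 m y) = dist (lift_to N2 n x) (lift_to N2 m y).
Proof.
  intros. rewrite <- (dist_lift_to_add N1 N2), <- (dist_lift_to_add N2 N1) by lia.
  rewrite (Nat.add_comm N2 N1). reflexivity.
Qed.

Lemma dGraw_lift_to N n (x : Fn n) m (y : Fn m) : (n <= N)%nat -> (m <= N)%nat ->
  dGraw (existT _ n x) (existT _ m y) = dist (lift_to N n x) (lift_to N m y).
Proof.
  intros. rewrite (dist_lift_to_indep N (n + m)) by lia.
  unfold dGraw. rewrite <- (lift_to_embUp n m x), <- (lift_to_embUp m n y).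
  change (eq_rect (m + n)%nat (fun k => car (Fn k)) (lift_to (m + n) n x) (n + m)%nat
            (Nat.add_comm m n))
    with (castFn (Nat.add_comm m n) (lift_to (m + n) n x)).
  destruct (Nat.add_comm m n). reflexivity.
Qed.

Lemma dGraw_at_level N (p q : Graw) : (projT1 p <= N)%nat -> (projT1 q <= N)%nat ->
  dGraw p q = dist (lift_to N _ (projT2 p)) (lift_to N _ (projT2 q)).
Proof. destruct p, q; simpl. apply dGraw_lift_to. Qed.

Lemma dGraw_refl p : dGraw p p = 0.
Proof. rewrite (dGraw_at_level (projT1 p)) by lia. apply (ptms_refl (Fn_ptms _)). Qed.

Lemma dGraw_ge0 p q : 0 <= dGraw p q.
Proof.
  rewrite (dGraw_at_level (projT1 p + projT1 q)) by lia. apply (ptms_ge0 (Fn_ptms _)).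
Qed.

Lemma dGraw_le1 p q : dGraw p q <= 1.
Proof.
  rewrite (dGraw_at_level (projT1 p + projT1 q)) by lia. apply (ptms_le1 (Fn_ptms _)).
Qed.

Lemma dGraw_sym p q : dGraw p q = dGraw q p.
Proof.
  rewrite (dGraw_at_level (projT1 p + projT1 q) p q),
    (dGraw_at_level (projT1 p + projT1 q) q p) by lia.
  apply (ptms_sym (Fn_ptms _)).
Qed.

Lemma dGraw_tri p q r : dGraw p r <= dGraw p q + dGraw q r.
Proof.
  set (N := (projT1 p + projT1 q + projT1 r)%nat).
  rewrite (dGraw_at_level N p r), (dGraw_at_level N p q), (dGraw_at_level N q r)
    by (unfold N; lia).
  apply (ptms_tri (Fn_ptms _)).
Qed.

Lemma dGraw_eq0_compat p p' : dGraw p p' = 0 -> forall q, dGraw p q = dGraw p' q.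
Proof.
  intros H q. pose proof (dGraw_tri p p' q). pose proof (dGraw_tri p' p q).
  pose proof (dGraw_sym p p'). lra.
Qed.

Definition clsG (p : Graw) : G := clsT dGraw p.

Lemma dist_clsG p q : dist (clsG p) (clsG q) = dGraw p q.
Proof.
  apply mdist_mcls; intros; auto using dGraw_refl, dGraw_sym, dGraw_eq0_compat.
Qed.

Lemma clsG_mrep (w : G) : clsG (mrep w) = w.
Proof. symmetry. apply mcls_mrep. Qed.

Lemma clsG_eq p q : dGraw p q = 0 -> clsG p = clsG q.
Proof. intros H. apply mcls_eq; auto. intros; apply dGraw_eq0_compat; auto. Qed.

Lemma G_ptms : is_ptms G.
Proof.
  assert (H0 : forall a b : Tri, dist (clsG (existT _ 0%nat a)) (clsG (existT _ 0%nat b)) = dI a b).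
  { intros. rewrite dist_clsG, (dGraw_lift_to 0) by lia. reflexivity. }
  constructor; intros.
  - apply dGraw_ge0.
  - apply dGraw_refl.
  - apply dGraw_sym.
  - apply dGraw_tri.
  - apply dGraw_le1.
  - exact (H0 tT tL).
  - exact (H0 tT tR).
  - exact (H0 tL tR).
Qed.

Lemma G_separated : separated G.
Proof. intros z w H. apply mdist_eq0 in H; auto. intros; apply dGraw_eq0_compat; auto. Qed.

Lemma corner_G m k : corner G m k = clsG (existT _ 0%nat (corner Itms m k)).
Proof. destruct m, k; reflexivity. Qed.

Lemma lift_to_corner N m k : lift_to N 0 (corner Itms m k) = corner (Fn N) m k.
Proof.
  induction N as [|N IH].
  - apply lift_to_id.
  - rewrite lift_to_succ by lia. rewrite IH. apply (tripointed_corner _ _ _ (emb_tripointed N)).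
Qed.

Lemma lift_to_tens N n m (x : Fn n) : (n <= N)%nat ->
  lift_to (succ N) (succ n) (tens (Fn n) m x) = tens (Fn N) m (lift_to N n x).
Proof.
  intros H. destruct (Nat.le_exists_sub n N H) as [t [-> _]]. clear H.
  induction t as [|t IH].
  - simpl plus. rewrite !lift_to_id. reflexivity.
  - change (succ t + n)%nat with (succ (t + n)).
    rewrite lift_to_succ by lia. rewrite IH. simpl emb.
    rewrite (Fmap_tens _ _ _ (Fn_ptms _) (Fn_separated _) (Fn_ptms (succ (t + n)))
               (emb_tripointed _)).
    rewrite lift_to_succ by lia. reflexivity.
Qed.

Lemma tdist_G_lift_to N n (x : Fn n) n' (y : Fn n') m m' : (n <= N)%nat -> (n' <= N)%nat ->
  tdist G (m, clsG (existT _ n x)) (m', clsG (existT _ n' y)) =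
  tdist (Fn N) (m, lift_to N n x) (m', lift_to N n' y).
Proof.
  intros H1 H2. unfold tdist; cbn [fst snd]. rewrite dist_clsG, (dGraw_lift_to N) by lia.
  assert (Hc : forall o (z : Fn o) m, (o <= N)%nat ->
            (fun k => dist (clsG (existT _ o z)) (corner G m k)) =
            (fun k => dist (lift_to N o z) (corner (Fn N) m k))).
  { intros o z m0 Ho. apply functional_extensionality; intros k.
    rewrite corner_G, dist_clsG, (dGraw_lift_to N), lift_to_corner by lia. reflexivity. }
  rewrite !Hc by lia. reflexivity.
Qed.

Lemma dist_Fn_tens N m n (x y : Fn N) :
  @dist (Fn (succ N)) (tens (Fn N) m x) (tens (Fn N) n y) = tdist (Fn N) (m,x) (n,y).
Proof. apply tens_dist, Fn_ptms. Qed.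

Lemma galg_spec (z : Ften G) : exists n m (y : Fn n),
  galg z = clsG (existT _ (succ n) (tens (Fn n) m y)) /\
  tdist G (mrep z) (m, clsG (existT _ n y)) = 0.
Proof.
  unfold galg. destruct (mrep z) as [m u]; simpl.
  pose proof (clsG_mrep u) as Hu.
  destruct (mrep u) as [n x]. exists n, m, x. split; [reflexivity|].
  rewrite Hu. apply tdist_refl, G_ptms.
Qed.

Lemma galg_tens_dist m (u : G) n' m' (y : Fn n') :
  dist (galg (tens G m u)) (clsG (existT _ (succ n') (tens (Fn n') m' y))) =
  tdist G (m,u) (m', clsG (existT _ n' y)).
Proof.
  destruct (galg_spec (tens G m u)) as [n [m1 [x [E1 E2]]]]. rewrite E1.
  rewrite dist_clsG, (dGraw_lift_to (succ (n + n'))), !lift_to_tens by lia.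
  rewrite dist_Fn_tens, <- tdist_G_lift_to by lia.
  rewrite (tdist_eq0_compat_l G G_ptms (m,u) (mrep (tens G m u)))
    by (apply tdist_mrep_tens, G_ptms).
  symmetry. apply tdist_eq0_compat_l; [apply G_ptms|exact E2].
Qed.

Lemma galg_dist m (u : G) m' (v : G) :
  dist (galg (tens G m u)) (galg (tens G m' v)) = tdist G (m,u) (m',v).
Proof.
  destruct (galg_spec (tens G m' v)) as [n [m1 [x [E1 E2]]]]. rewrite E1, galg_tens_dist.
  apply tdist_eq0_compat_r; [apply G_ptms|].
  pose proof (tdist_mrep_tens G G_ptms m' v).
  pose proof (tdist_tri G G_ptms (m',v) (mrep (tens G m' v)) (m1, clsG (existT _ n x))).
  pose proof (tdist_ge0 G G_ptms (m',v) (m1, clsG (existT _ n x))). 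
  pose proof (tdist_sym G G_ptms (m',v) (m1, clsG (existT _ n x))). lra.
Qed.

Lemma galg_corner m : galg (tens G m (corner G m m)) = corner G m m.
Proof.
  assert (E : corner G m m = clsG (existT _ 1%nat (tens (Fn 0) m (corner Itms m m)))).
  { rewrite corner_G. apply clsG_eq.
    rewrite (dGraw_lift_to 1), lift_to_id, lift_to_succ by lia. simpl lift_to.
    destruct m; apply (ptms_refl (Fn_ptms 1)). }
  apply G_separated. rewrite E at 2. rewrite galg_tens_dist, <- corner_G.
  apply tdist_refl, G_ptms.
Qed.

Lemma galg_surj (w : G) : exists m u, galg (tens G m u) = w.
Proof.
  rewrite <- (clsG_mrep w). destruct (mrep w) as [n x].
  set (z := emb n x).
  assert (E : clsG (existT _ n x) =
              clsG (existT _ (succ n) (tens _ (fst (mrep z)) (snd (mrep z))))).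
  { apply clsG_eq. rewrite tens_mrep.
    rewrite (dGraw_lift_to (succ n)), lift_to_id, lift_to_succ, lift_to_id by lia.
    apply (ptms_refl (Fn_ptms _)). }
  rewrite E. exists (fst (mrep z)), (clsG (existT _ n (snd (mrep z)))).
  apply G_separated. rewrite galg_tens_dist. apply tdist_refl, G_ptms.
Qed.

(** * The completion S and the isomorphism ψ *)

Lemma dist_cauchy_cv (u v : nat -> G) : cauchy u -> cauchy v ->
  exists l, Un_cv (fun n => dist (u n) (v n)) l.
Proof.
  intros Hu Hv. destruct (R_complete (fun n => dist (u n) (v n))) as [l Hl]; [|eauto].
  intros eps He. destruct (Hu (eps/2)) as [N1 H1]; [lra|]. destruct (Hv (eps/2)) as [N2 H2]; [lra|].
  exists (N1 + N2)%nat. intros n m Hn Hm. unfold R_dist.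
  specialize (H1 n m ltac:(lia) ltac:(lia)). specialize (H2 n m ltac:(lia) ltac:(lia)).
  pose proof (ptms_tri G_ptms (u n) (u m) (v n)). pose proof (ptms_tri G_ptms (u m) (v m) (v n)).
  pose proof (ptms_tri G_ptms (u m) (u n) (v m)). pose proof (ptms_tri G_ptms (u n) (v n) (v m)).
  rewrite (ptms_sym G_ptms (u m) (u n)) in *. rewrite (ptms_sym G_ptms (v m) (v n)) in *.
  apply Rabs_def1; lra.
Qed.

Lemma dS_cv (u v : nat -> G) : cauchy u -> cauchy v ->
  Un_cv (fun n => dist (u n) (v n)) (dS u v).
Proof.
  intros Hu Hv. destruct (dist_cauchy_cv u v Hu Hv) as [l Hl].
  unfold dS. rewrite (seq_lim_eq _ l Hl). exact Hl.
Qed.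

Lemma dS_ge0 u v : cauchy u -> cauchy v -> 0 <= dS u v.
Proof. intros. eapply cv_ge_const; [apply dS_cv; auto|]. intros; apply (ptms_ge0 G_ptms). Qed.

Lemma dS_le1 u v : cauchy u -> cauchy v -> dS u v <= 1.
Proof.
  intros. apply (Rle_cv_lim (Un:=fun n => dist (u n) (v n)) (Vn:=fun _ => 1)).
  - intros; apply (ptms_le1 G_ptms).
  - apply dS_cv; auto.
  - apply cv_const.
Qed.

Lemma dS_const (x y : G) : dS (fun _ => x) (fun _ => y) = dist x y.
Proof. apply seq_lim_eq, cv_const. Qed.

Lemma dS_refl u : cauchy u -> dS u u = 0.
Proof.
  intros Hu. unfold dS. apply seq_lim_eq.
  replace (fun n => dist (u n) (u n)) with (fun _ : nat => 0); [apply cv_const|].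
  apply functional_extensionality; intros; rewrite (ptms_refl G_ptms); auto.
Qed.

Lemma dS_sym u v : cauchy u -> cauchy v -> dS u v = dS v u.
Proof.
  intros Hu Hv. unfold dS at 1. apply seq_lim_eq.
  replace (fun n => dist (u n) (v n)) with (fun n => dist (v n) (u n)); [apply dS_cv; auto|].
  apply functional_extensionality; intros; apply (ptms_sym G_ptms).
Qed.

Lemma dS_tri u v w : cauchy u -> cauchy v -> cauchy w -> dS u w <= dS u v + dS v w.
Proof.
  intros. apply (Rle_cv_lim (Un:=fun n => dist (u n) (w n))
                            (Vn:=fun n => dist (u n) (v n) + dist (v n) (w n))).
  - intros; apply (ptms_tri G_ptms).
  - apply dS_cv; auto.
  - apply CV_plus; apply dS_cv; auto.
Qed.

Lemma dist_cv_eq0_compat (a b v : nat -> G) l : cauchy a -> cauchy b -> dS a b = 0 ->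
  Un_cv (fun n => dist (a n) (v n)) l -> Un_cv (fun n => dist (b n) (v n)) l.
Proof.
  intros Ha Hb Hab Hl.
  apply cv_squeeze with (e := fun n => Rabs (dist (a n) (v n) - l) + dist (a n) (b n)).
  - intros n. pose proof (ptms_tri G_ptms (b n) (a n) (v n)).
    pose proof (ptms_tri G_ptms (a n) (b n) (v n)).
    rewrite (ptms_sym G_ptms (b n) (a n)) in *.
    pose proof (Rabs_triang (dist (b n) (v n) - dist (a n) (v n)) (dist (a n) (v n) - l)) as T.
    replace (dist (b n) (v n) - dist (a n) (v n) + (dist (a n) (v n) - l))
      with (dist (b n) (v n) - l) in T by ring.
    assert (Rabs (dist (b n) (v n) - dist (a n) (v n)) <= dist (a n) (b n))
      by (apply Rabs_le; lra).
    lra.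
  - assert (Hz : Un_cv (fun n => dist (a n) (b n)) 0) by (rewrite <- Hab; apply dS_cv; auto).
    pose proof (CV_plus _ _ _ _ (cv_abs_sub _ _ Hl) Hz) as Hp. rewrite Rplus_0_r in Hp. exact Hp.
Qed.

(* [v] need not be Cauchy, so both limits may fail to exist and [dS] then
   takes its junk value 0 on both sides. *)
Lemma dS_eq0_compat u u' : cauchy u -> cauchy u' -> dS u u' = 0 -> forall v, dS u v = dS u' v.
Proof.
  intros Hu Hu' H0 v. pose proof H0 as H0'. rewrite dS_sym in H0'; auto.
  destruct (classic (exists l, Un_cv (fun n => dist (u n) (v n)) l)) as [[l Hl]|Hn].
  - unfold dS. rewrite (seq_lim_eq _ l Hl). symmetry. apply seq_lim_eq.
    apply (dist_cv_eq0_compat u u'); auto.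
  - unfold dS, seq_lim.
    destruct (excluded_middle_informative (exists l, Un_cv (fun n => dist (u n) (v n)) l));
      [tauto|].
    destruct (excluded_middle_informative (exists l, Un_cv (fun n => dist (u' n) (v n)) l))
      as [[l Hl]|]; [|reflexivity].
    exfalso. apply Hn. exists l. apply (dist_cv_eq0_compat u' u); auto.
Qed.

Definition clsS (u : nat -> G) (h : cauchy u) : S := mcls cauchy dS u h.

Lemma mrep_S_cauchy (P : S) : cauchy (mrep P).
Proof. apply mrep_dom. Qed.

Lemma dist_clsS u v hu hv : dist (clsS u hu) (clsS v hv) = dS u v.
Proof. apply mdist_mcls; [apply dS_refl|apply dS_sym|apply dS_eq0_compat]. Qed.

Lemma clsS_mrep (P : S) h : clsS (mrep P) h = P.
Proof.
  unfold clsS. rewrite (proof_irrelevance _ h (mrep_dom _ _ _ P)). symmetry. apply mcls_mrep.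
Qed.

Lemma clsS_eq u v hu hv : dS u v = 0 -> clsS u hu = clsS v hv.
Proof. intros. apply mcls_eq; auto. apply dS_eq0_compat. Qed.

Lemma corner_S m k : corner S m k = clsS (fun _ => corner G m k) (const_cauchy _).
Proof. destruct m, k; reflexivity. Qed.

Lemma S_ptms : is_ptms S.
Proof.
  assert (Hc : forall m k m' k', dist (corner S m k) (corner S m' k') =
                                 dist (corner G m k) (corner G m' k')).
  { intros. rewrite !corner_S, dist_clsS. apply dS_const. }
  constructor; intros.
  - apply dS_ge0; apply mrep_S_cauchy.
  - apply dS_refl; apply mrep_S_cauchy.
  - apply dS_sym; apply mrep_S_cauchy.
  - apply dS_tri; apply mrep_S_cauchy.
  - apply dS_le1; apply mrep_S_cauchy.
  - change (dist (corner S ma ma) (corner S mb mb) = 1).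
    rewrite Hc. apply (ptms_TL G_ptms).
  - change (dist (corner S ma ma) (corner S mc mc) = 1).
    rewrite Hc. apply (ptms_TR G_ptms).
  - change (dist (corner S mb mb) (corner S mc mc) = 1).
    rewrite Hc. apply (ptms_LR G_ptms).
Qed.

Lemma S_separated : separated S.
Proof. intros P Q H. apply mdist_eq0 in H; auto using dS_eq0_compat. Qed.

Lemma cauchy_galg m (v : nat -> G) : cauchy v -> cauchy (fun k => galg (tens G m (v k))).
Proof.
  intros Hv eps He. destruct (Hv eps He) as [N HN]. exists N. intros i j Hi Hj.
  rewrite galg_dist, tdist_same_lab by exact G_ptms. specialize (HN i j Hi Hj).
  pose proof (ptms_ge0 G_ptms (v i) (v j)). lra.
Qed.

(* The tensor distance depends continuously on its data, so g being an
   isometry passes to the limit. *)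
Lemma dS_galg m m' (v v' : nat -> G) hv hv' :
  dS (fun k => galg (tens G m (v k))) (fun k => galg (tens G m' (v' k))) =
  tdist S (m, clsS v hv) (m', clsS v' hv').
Proof.
  apply seq_lim_eq.
  replace (fun n => dist (galg (tens G m (v n))) (galg (tens G m' (v' n))))
    with (fun n => tdist G (m, v n) (m', v' n))
    by (apply functional_extensionality; intros n; rewrite galg_dist; reflexivity).
  unfold tdist. cbn [fst snd]. rewrite dist_clsS.
  assert (Hc : forall o u hu, (fun k => dist (clsS u hu) (corner S o k)) =
                              (fun k => dS u (fun _ => corner G o k))).
  { intros. apply functional_extensionality; intros k. rewrite corner_S, dist_clsS. reflexivity. }
  rewrite !Hc. apply tform_cv.
  - apply dS_cv; auto.
  - intros k. apply (dS_cv v (fun _ => corner G m k)); auto using const_cauchy.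
  - intros k. apply (dS_cv v' (fun _ => corner G m' k)); auto using const_cauchy.
Qed.

Lemma psi_tens_clsS m u hu :
  psi (tens S m (clsS u hu)) = clsS (fun k => galg (tens G m (u k))) (cauchy_galg m u hu).
Proof.
  unfold psi, mcls_or. cbv zeta.
  pose proof (tdist_mrep_tens S S_ptms m (clsS u hu)) as E.
  destruct (mrep (tens S m (clsS u hu))) as [m1 p1]. cbn [fst snd].
  destruct (excluded_middle_informative _) as [h|n].
  - change (clsS (fun k => galg (tens G m1 (mrep p1 k))) h =
            clsS (fun k => galg (tens G m (u k))) (cauchy_galg m u hu)).
    apply clsS_eq. rewrite (dS_galg m1 m (mrep p1) u (mrep_S_cauchy p1) hu), clsS_mrep.
    rewrite tdist_sym by exact S_ptms. exact E.
  - exfalso; apply n. apply cauchy_galg, mrep_S_cauchy.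
Qed.

Lemma psi_dist m p m' q : dist (psi (tens S m p)) (psi (tens S m' q)) = tdist S (m,p) (m',q).
Proof.
  rewrite <- (clsS_mrep p (mrep_S_cauchy p)), <- (clsS_mrep q (mrep_S_cauchy q)).
  rewrite !psi_tens_clsS, dist_clsS. apply dS_galg.
Qed.

Lemma psi_inj (z z' : Ften S) : psi z = psi z' -> z = z'.
Proof.
  intros H. rewrite <- (tens_mrep S z), <- (tens_mrep S z') in *.
  apply tens_eq; [exact S_ptms|]. rewrite <- psi_dist, H. apply (ptms_refl S_ptms).
Qed.

Lemma s_psi z : s (psi z) = z.
Proof.
  unfold s. destruct (excluded_middle_informative _) as [h|n].
  - destruct (constructive_indefinite_description _ h) as [z' Hz']; simpl. apply psi_inj; auto.
  - exfalso; eauto.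
Qed.

Lemma lab_infinitely_often (l : nat -> Mlab) :
  exists m, forall N, exists j, (N <= j)%nat /\ l j = m.
Proof.
  apply NNPP; intros Hn.
  assert (H : forall m, exists N, forall j, (N <= j)%nat -> l j <> m).
  { intros m. apply NNPP; intros Hm. apply Hn. exists m. intros N.
    apply NNPP; intros HN. apply Hm. exists N. intros j Hj Hj'. apply HN. eauto. }
  destruct (H ma) as [Na Ha], (H mb) as [Nb Hb], (H mc) as [Nc Hc].
  specialize (Ha (Na+Nb+Nc)%nat ltac:(lia)). specialize (Hb (Na+Nb+Nc)%nat ltac:(lia)).
  specialize (Hc (Na+Nb+Nc)%nat ltac:(lia)). destruct (l (Na+Nb+Nc)%nat); congruence.
Qed.

Section Relabelling.
Variables (v : nat -> G) (l : nat -> Mlab) (w : nat -> G) (m : Mlab).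
Hypothesis Hv : cauchy v.
Hypothesis Hvw : forall k, galg (tens G (l k) (w k)) = v k.
Hypothesis Hm : forall N, exists j, (N <= j)%nat /\ l j = m.

(* A term of another copy that is close to a term of copy m sits near the
   junction of the two copies; replace it by that junction, seen from copy m. *)
Definition relabel (k : nat) : G :=
  if Mlab_eq_dec (l k) m then w k else corner G m (third_lab (l k) m).

Lemma relabel_close eps : 0 < eps <= /4 -> exists N, forall k, (N <= k)%nat ->
  dist (galg (tens G m (relabel k))) (v k) <= eps /\
  forall j, (N <= j)%nat -> l j = m -> dist (relabel k) (w j) <= 2 * eps.
Proof.
  intros He. destruct (Hv eps ltac:(lra)) as [N HN]. exists N. intros k Hk.
  assert (Hkj : forall j, (N <= j)%nat -> l j = m -> tdist G (l k, w k) (m, w j) < eps).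
  { intros j Hj Hlj. specialize (HN k j Hk Hj).
    rewrite <- (Hvw k), <- (Hvw j), galg_dist, Hlj in HN. exact HN. }
  unfold relabel. destruct (Mlab_eq_dec (l k) m) as [e|e].
  - split.
    + rewrite <- e, Hvw, (ptms_refl G_ptms). lra.
    + intros j Hj Hlj. specialize (Hkj j Hj Hlj). rewrite e, tdist_same_lab in Hkj by exact G_ptms.
      lra.
  - destruct (third_lab_neq (l k) m e) as [Ht1 Ht2]. set (t := third_lab (l k) m) in *.
    assert (Hjunc : forall j, (N <= j)%nat -> l j = m ->
              dist (w k) (corner G (l k) t) / 2 + dist (w j) (corner G m t) / 2 < eps).
    { intros j Hj Hlj. pose proof (Hkj j Hj Hlj) as H.
      destruct (tdist_lt_half G G_ptms (l k) m (w k) (w j)) as [[]|[_ E]]; [lra|congruence|].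
      fold t in E. lra. }
    pose proof (ptms_ge0 G_ptms (w k) (corner G (l k) t)).
    split.
    + destruct (Hm N) as [j0 [Hj0 Hlj0]]. specialize (Hjunc j0 Hj0 Hlj0).
      pose proof (ptms_ge0 G_ptms (w j0) (corner G m t)).
      rewrite <- (Hvw k), galg_dist.
      eapply Rle_trans; [apply (tdist_le_junction G _ _ t); cbn [fst snd]; congruence|].
      cbn [fst snd]. rewrite (ptms_refl G_ptms). lra.
    + intros j Hj Hlj. specialize (Hjunc j Hj Hlj). rewrite (ptms_sym G_ptms). lra.
Qed.

Lemma relabel_cauchy : cauchy relabel.
Proof.
  intros eps He. destruct (relabel_close (Rmin (eps/5) (/4))) as [N HN].
  { split; [apply Rmin_glb_lt; lra|apply Rmin_r]. }
  pose proof (Rmin_l (eps/5) (/4)).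
  destruct (Hm N) as [j [Hj Hlj]]. exists N. intros k k' Hk Hk'.
  destruct (HN k Hk) as [_ H1], (HN k' Hk') as [_ H2].
  specialize (H1 j Hj Hlj). specialize (H2 j Hj Hlj).
  pose proof (ptms_tri G_ptms (relabel k) (w j) (relabel k')) as T.
  rewrite (ptms_sym G_ptms (w j) (relabel k')) in T. lra.
Qed.

Lemma relabel_limit : dS (fun k => galg (tens G m (relabel k))) v = 0.
Proof.
  set (r := dS (fun k => galg (tens G m (relabel k))) v).
  pose proof (cauchy_galg m _ relabel_cauchy) as Hg.
  apply Rle_antisym; [|apply dS_ge0; auto]. apply Rnot_lt_le; intros Hr.
  set (eps := Rmin (r / 2) (/4)).
  assert (He : 0 < eps <= /4) by (split; [apply Rmin_glb_lt; lra|apply Rmin_r]).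
  assert (r <= eps).
  { apply (cv_le_eventually _ _ _ (dS_cv _ _ Hg Hv)).
    destruct (relabel_close eps He) as [N HN]. exists N. intros k Hk. apply HN; auto. }
  assert (eps <= r / 2) by apply Rmin_l. lra.
Qed.
End Relabelling.

Lemma psi_surj (y : S) : exists z, psi z = y.
Proof.
  set (v := mrep y). assert (Hv : cauchy v) by apply mrep_S_cauchy.
  destruct (choice (fun k (mu : Mlab * G) => galg (tens G (fst mu) (snd mu)) = v k))
    as [mu Hmu].
  { intros k. destruct (galg_surj (v k)) as [m [u Hu]]. exists (m,u); auto. }
  destruct (lab_infinitely_often (fun k => fst (mu k))) as [m Hm].
  pose proof (relabel_cauchy v _ _ m Hv Hmu Hm) as Hu.
  exists (tens S m (clsS _ Hu)). rewrite psi_tens_clsS, <- (clsS_mrep y Hv).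
  apply clsS_eq. apply relabel_limit; auto.
Qed.

Lemma psi_s y : psi (s y) = y.
Proof.
  unfold s. destruct (excluded_middle_informative _) as [h|n].
  - destruct (constructive_indefinite_description _ h) as [z' Hz']; simpl. auto.
  - exfalso; apply n, psi_surj.
Qed.

(** * The final coalgebra map *)

Lemma is_tms_ptms X : is_tms X -> is_ptms X.
Proof.
  intros [[H1 [H2 [H3 H4]]] [H5 [_ [_ [_ [H6 [H7 H8]]]]]]].
  constructor; auto. intros x. apply H2. reflexivity.
Qed.

Lemma is_tms_separated X : is_tms X -> separated X.
Proof. intros [[_ [H2 _]] _] x y. apply H2. Qed.

Lemma corner_cases (X : tms) m k :
  corner X m k = pT X \/ corner X m k = pL X \/ corner X m k = pR X.
Proof. destruct m, k; simpl; auto. Qed.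

Lemma mrep_tens_outer X : is_ptms X -> separated X -> forall m,
  mrep (tens X m (corner X m m)) = (m, corner X m m).
Proof.
  intros HX SX m. pose proof (tdist_mrep_tens X HX m (corner X m m)) as E.
  destruct (mrep (tens X m (corner X m m))) as [n y].
  destruct (tdist_eq0 X HX m n _ _ E) as [[<- e]|[Hmn [e1 _]]].
  - apply SX in e. subst. reflexivity.
  - destruct (third_lab_neq m n Hmn).
    rewrite (corner_dist X HX m m) in e1 by congruence. lra.
Qed.

Section Isolation.
Variable X : tms.
Hypotheses (HX : is_ptms X) (SX : separated X).

Definition gap (x c : X) : R := if Req_EM_T (dist x c) 0 then 1 else dist x c.

(* A radius around x containing no distinguished point other than x itself. *)
Definition isolation (x : X) : R :=
  Rmin (gap x (pT X)) (Rmin (gap x (pL X)) (gap x (pR X))).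

Lemma isolation_pos x : 0 < isolation x.
Proof.
  assert (H : forall c, 0 < gap x c).
  { intros c. unfold gap. destruct (Req_EM_T _ _); [lra|].
    pose proof (ptms_ge0 HX x c). lra. }
  unfold isolation. repeat apply Rmin_glb_lt; apply H.
Qed.

Lemma eq_corner_of_lt_isolation x m k : dist x (corner X m k) < isolation x -> x = corner X m k.
Proof.
  intros Hlt. apply SX. destruct (Req_EM_T (dist x (corner X m k)) 0) as [E|Hne]; [exact E|].
  exfalso. assert (isolation x <= gap x (corner X m k)).
  { unfold isolation. destruct (corner_cases X m k) as [-> | [-> | ->]].
    - apply Rmin_l.
    - eapply Rle_trans; [apply Rmin_r|apply Rmin_l].
    - eapply Rle_trans; [apply Rmin_r|apply Rmin_r]. }
  unfold gap in *. destruct (Req_EM_T _ _); [contradiction|lra].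
Qed.
End Isolation.

Section Coalgebra.
Variables (X : tms) (e : X -> Ften X).
Hypotheses (HXt : is_tms X) (He : morph X (Ften X) e).

Let HX := is_tms_ptms X HXt.
Let SX := is_tms_separated X HXt.

Definition lab (x : X) : Mlab := fst (mrep (e x)).
Definition next (x : X) : X := snd (mrep (e x)).

Fixpoint approx (k : nat) (x : X) : G :=
  match k with
  | O => pT G
  | succ k' => galg (tens G (lab x) (approx k' (next x)))
  end.

Lemma approx_step k : forall x, dist (approx (succ k) x) (approx k x) <= (/2)^k.
Proof.
  induction k as [|k IH]; intros x.
  - simpl pow. apply (ptms_le1 G_ptms).
  - change (dist (galg (tens G (lab x) (approx (succ k) (next x))))
                 (galg (tens G (lab x) (approx k (next x)))) <= (/2)^(succ k)).
    rewrite galg_dist, tdist_same_lab by exact G_ptms.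
    specialize (IH (next x)). simpl pow. lra.
Qed.

Lemma approx_close i t x : dist (approx (t + i) x) (approx i x) <= 2 * (/2)^i - 2 * (/2)^(t+i).
Proof.
  induction t as [|t IH].
  - simpl plus. rewrite (ptms_refl G_ptms). lra.
  - change (succ t + i)%nat with (succ (t + i)).
    pose proof (approx_step (t+i) x).
    pose proof (ptms_tri G_ptms (approx (succ (t+i)) x) (approx (t+i) x) (approx i x)).
    simpl pow. lra.
Qed.

Lemma approx_cauchy x : cauchy (fun k => approx k x).
Proof.
  intros eps Heps. destruct (half_pow_lt (eps/2)) as [N HN]; [lra|]. exists N.
  assert (Hc : forall i j, (N <= i)%nat -> (i <= j)%nat -> dist (approx j x) (approx i x) < eps).
  { intros i j Hi Hij. replace j with ((j - i) + i)%nat by lia.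
    pose proof (approx_close i (j-i) x). pose proof (pow_le (/2) (j - i + i) ltac:(lra)).
    pose proof (half_pow_antimono N i Hi). lra. }
  intros i j Hi Hj. destruct (Nat.le_ge_cases i j).
  - rewrite (ptms_sym G_ptms). apply Hc; auto.
  - apply Hc; auto.
Qed.

Definition ana (x : X) : S := clsS (fun k => approx k x) (approx_cauchy x).

Lemma ana_fix x : ana x = psi (tens S (lab x) (ana (next x))).
Proof.
  unfold ana at 2. rewrite psi_tens_clsS. apply clsS_eq.
  pose proof (cauchy_galg (lab x) _ (approx_cauchy (next x))) as Hg.
  apply (lim_eq0_of_le_half_pow _ _ (dS_cv _ _ (approx_cauchy x) Hg)).
  - intros; apply (ptms_ge0 G_ptms).
  - intros k. rewrite (ptms_sym G_ptms). apply (approx_step k x).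
Qed.

Lemma e_outer m : e (corner X m m) = tens X m (corner X m m).
Proof.
  destruct He as [_ T]. rewrite (tripointed_corner _ _ _ T). destruct m; reflexivity.
Qed.

Lemma approx_outer m k : dist (approx k (corner X m m)) (corner G m m) <= (/2)^k.
Proof.
  induction k as [|k IH].
  - simpl pow. apply (ptms_le1 G_ptms).
  - change (dist (galg (tens G (lab (corner X m m)) (approx k (next (corner X m m)))))
                 (corner G m m) <= (/2)^(succ k)).
    unfold lab, next. rewrite e_outer, mrep_tens_outer by auto. cbn [fst snd].
    rewrite <- (galg_corner m) at 1. rewrite galg_dist, tdist_same_lab by exact G_ptms.
    simpl pow. lra.
Qed.

Lemma ana_outer m : ana (corner X m m) = corner S m m.
Proof.
  rewrite corner_S. apply clsS_eq.
  apply (lim_eq0_of_le_half_pow _ _ (dS_cv _ _ (approx_cauchy _) (const_cauchy _))).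
  - intros; apply (ptms_ge0 G_ptms).
  - intros k. apply approx_outer.
Qed.

Lemma ana_tripointed : tripointed X S ana.
Proof. split; [|split]; [exact (ana_outer ma)|exact (ana_outer mb)|exact (ana_outer mc)]. Qed.

Lemma ana_dist x y : dist (ana x) (ana y) = tdist S (lab x, ana (next x)) (lab y, ana (next y)).
Proof. rewrite (ana_fix x), (ana_fix y). apply psi_dist. Qed.

Lemma e_dist x y : dist (e x) (e y) = tdist X (lab x, next x) (lab y, next y).
Proof.
  rewrite Ften_dist by exact HX. unfold lab, next. rewrite <- !surjective_pairing. reflexivity.
Qed.

Definition ana_modulus (j : nat) (x : X) (delta : R) : Prop :=
  0 < delta /\ forall y, dist x y < delta -> dist (ana x) (ana y) <= (/2)^j.

(* If e(x) and e(y) are close with different labels, both successors lie near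
   the common junction; by isolation, next x is that junction corner itself. *)
Lemma ana_modulus_succ j x d0 dc : ana_modulus j (next x) d0 ->
  (forall m k, ana_modulus j (corner X m k) dc) -> exists delta, ana_modulus (succ j) x delta.
Proof.
  intros [Hd0 H0] Hc. pose proof (Hc ma ma) as [Hdc _].
  pose proof (isolation_pos X HX (next x)) as Hiso.
  set (eps := Rmin (Rmin d0 dc) (Rmin (isolation X (next x)) 1) / 4).
  assert (E : 0 < eps /\ 2 * eps <= d0 /\ 2 * eps <= dc /\
              2 * eps < isolation X (next x) /\ eps < /2).
  { unfold eps. pose proof (Rmin_l (Rmin d0 dc) (Rmin (isolation X (next x)) 1)).
    pose proof (Rmin_r (Rmin d0 dc) (Rmin (isolation X (next x)) 1)).
    pose proof (Rmin_l d0 dc). pose proof (Rmin_r d0 dc).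
    pose proof (Rmin_l (isolation X (next x)) 1). pose proof (Rmin_r (isolation X (next x)) 1).
    assert (0 < Rmin (Rmin d0 dc) (Rmin (isolation X (next x)) 1))
      by (apply Rmin_glb_lt; apply Rmin_glb_lt; lra).
    lra. }
  destruct E as [Heps [E0 [Ec [Ei Eh]]]]. clearbody eps.
  destruct He as [Ce _]. destruct (Ce x eps Heps) as [de [Hde Hce]].
  exists de. split; auto. intros y Hy. specialize (Hce y Hy). rewrite e_dist in Hce.
  rewrite ana_dist. simpl pow.
  destruct (tdist_lt_half X HX (lab x) (lab y) (next x) (next y) ltac:(lra))
    as [[Elab Ed]|[Hlab Ed]].
  - rewrite <- Elab in *. rewrite tdist_same_lab by exact S_ptms.
    pose proof (tdist_ge0 X HX (lab x, next x) (lab x, next y)).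
    pose proof (H0 (next y) ltac:(lra)). lra.
  - destruct (third_lab_neq (lab x) (lab y) Hlab). set (t := third_lab (lab x) (lab y)) in *.
    pose proof (ptms_ge0 HX (next x) (corner X (lab x) t)).
    pose proof (ptms_ge0 HX (next y) (corner X (lab y) t)).
    assert (Ex : next x = corner X (lab x) t)
      by (apply (eq_corner_of_lt_isolation X SX); lra).
    destruct (Hc (lab y) t) as [_ Hct].
    pose proof (Hct (next y) ltac:(rewrite (ptms_sym HX); lra)).
    eapply Rle_trans; [apply (tdist_le_junction S _ _ t); cbn [fst snd]; congruence|].
    cbn [fst snd]. rewrite Ex, !(tripointed_corner _ _ _ ana_tripointed) in *.
    rewrite (ptms_refl S_ptms), (ptms_sym S_ptms). lra.
Qed.

Lemma ana_modulus_exists j : forall x, exists delta, ana_modulus j x delta.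
Proof.
  induction j as [|j IH]; intros x.
  - exists 1. split; [lra|]. intros; simpl pow. apply (ptms_le1 S_ptms).
  - destruct (IH (next x)) as [d0 H0].
    destruct (IH (pT X)) as [dT [HdT HT]], (IH (pL X)) as [dL [HdL HL]],
      (IH (pR X)) as [dR [HdR HR]].
    apply (ana_modulus_succ j x d0 (Rmin dT (Rmin dL dR)) H0).
    intros m k. split; [repeat apply Rmin_glb_lt; auto|]. intros y Hy.
    pose proof (Rmin_l dT (Rmin dL dR)). pose proof (Rmin_r dT (Rmin dL dR)).
    pose proof (Rmin_l dL dR). pose proof (Rmin_r dL dR).
    destruct (corner_cases X m k) as [E | [E | E]]; rewrite E in *;
      [apply HT | apply HL | apply HR]; lra.
Qed.

Lemma ana_continuous : continuous_map X S ana.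
Proof.
  intros x eps Heps. destruct (half_pow_lt eps Heps) as [j Hj].
  destruct (ana_modulus_exists j x) as [d [Hd H]]. exists d. split; auto.
  intros y Hy. specialize (H y Hy). lra.
Qed.

Lemma ana_coalg_hom x : s (ana x) = Fmap X S ana (e x).
Proof. rewrite ana_fix, s_psi. reflexivity. Qed.

(* f and ana are both fixed points of h |-> (x |-> ψ(lab x ⊗ h (next x))),
   a 1/2-contraction for the supremum distance. *)
Lemma ana_unique (f : X -> S) : (forall x, s (f x) = Fmap X S f (e x)) -> f = ana.
Proof.
  intros Hf.
  assert (Hfix : forall x, f x = psi (tens S (lab x) (f (next x)))).
  { intros x. rewrite <- (psi_s (f x)), Hf. reflexivity. }
  assert (Hb : forall j x, dist (f x) (ana x) <= (/2)^j).
  { induction j as [|j IH]; intros x.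
    - simpl pow. apply (ptms_le1 S_ptms).
    - rewrite (ana_fix x), (Hfix x), psi_dist, tdist_same_lab by exact S_ptms.
      specialize (IH (next x)). simpl pow. lra. }
  apply functional_extensionality; intros x. apply S_separated.
  apply eq0_of_le_half_pow; [apply (ptms_ge0 S_ptms)|]. intros j; apply Hb.
Qed.
End Coalgebra.

Theorem mainTheorem9 :
  forall (X : tms) (e : car X -> car (Ften X)),
    is_tms X -> morph X (Ften X) e ->
    exists! f : car X -> car S,
      morph X S f /\ (forall x : car X, s (f x) = Fmap X S f (e x)).
Proof.
  intros X e HXt He. exists (ana X e). split.
  - split; [split|].
    + apply ana_continuous; auto.
    + apply ana_tripointed; auto.
    + apply ana_coalg_hom.
  - intros f [_ Hf]. symmetry. apply ana_unique; auto.
Qed.
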